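(* Let $X$ be a $C^*$-correspondence over $A$ with left action $\phi$, and let $Y=X\oplus T$ over $B=A\oplus T$ be formed by adding the tail $T=(\ker\phi)^{(\mathbb N)}$. Let $(\tilde\pi,\tilde t)$ be a representation of $Y$ in a $C^*$-algebra that is coisometric on the ideal $\ker\phi\oplus T$ of $B$ (i.e. $\tilde\pi^{(1)}(\phi_B(b))=\tilde\pi(b)$ for all $b\in\ker\phi\oplus T$), and suppose that $a\mapsto\tilde\pi(a,\vec 0)$ is injective on $A$. For $f\in\ker\phi$ and $i\in\mathbb N$ let $\epsilon_i(f)\in T$ be the sequence with $f$ in the $i$-th position and $0$ elsewhere. Then for every $i\in\mathbb N$ and $f\in\ker\phi$, $\tilde\pi(0,\epsilon_i(f))=0$ implies $f=0$.
   Context: A $C^*$-correspondence over $A$ is a right Hilbert $A$-module $X$ with inner product $\langle\cdot,\cdot\rangle_A$ and a $*$-homomorphism $\phi:A\to\mathcal L(X)$; $\Theta_{\xi,\eta}(\zeta)=\xi\langle\eta,\zeta\rangle_A$, $\mathcal K(X)=\overline{\mathrm{span}}\{\Theta_{\xi,\eta}\}$. A representation of a correspondence $Y$ over $B$ in a $C^*$-algebra $C$ is a pair $(\tilde\pi,\tilde t)$ with $\tilde\pi:B\to C$ a $*$-homomorphism and $\tilde t:Y\to C$ linear such that $\tilde t(y)^*\tilde t(y')=\tilde\pi(\langle y,y'\rangle_B)$, $\tilde t(\phi_B(b)y)=\tilde\pi(b)\tilde t(y)$, $\tilde t(yb)=\tilde t(y)\tilde\pi(b)$; $\tilde\pi^{(1)}:\mathcal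 K(Y)\to C$ is the $*$-homomorphism with $\tilde\pi^{(1)}(\Theta_{y,y'})=\tilde t(y)\tilde t(y')^*$. Adding the tail: $T:=(\ker\phi)^{(\mathbb N)}$ is the $c_0$-direct sum of copies of $\ker\phi$ (elements $\vec f=(f_1,f_2,\dots)$, coordinatewise operations), a Hilbert module over itself with $\langle\vec f,\vec g\rangle=\vec f^*\vec g$; $B:=A\oplus T$, $Y:=X\oplus T$ with $(\xi,\vec f)(a,\vec g)=(\xi a,\vec f\vec g)$, $\langle(\xi,\vec f),(\nu,\vec g)\rangle_B=(\langle\xi,\nu\rangle_A,\vec f^*\vec g)$, $\phi_B(a,\vec f)(\xi,\vec g)=(\phi(a)\xi,(ag_1,f_1g_2,f_2g_3,\dots))$. *)

From HB Require Import structures.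
From mathcomp Require Import all_boot all_order all_algebra.
From mathcomp Require Import complex reals.
From Stdlib Require Lists.List.
Set Implicit Arguments. Unset Strict Implicit. Unset Printing Implicit Defensive.
Import Order.TTheory GRing.Theory Num.Theory.
Local Open Scope ring_scope.

Section Defs.
Variable R : realType.
Local Notation K := (R[i]).

Definition complete_wrt (V : lmodType K) (nrm : V -> R) : Prop :=
  forall u : nat -> V,
    (forall e : R, 0 < e -> exists N : nat, forall m n : nat,
        (N <= m)%N -> (N <= n)%N -> nrm (u m - u n) < e) ->
    exists l : V, forall e : R, 0 < e -> exists N : nat, forall n : nat,
        (N <= n)%N -> nrm (u n - l) < e.

Definition cstar_axioms (V : lmodType K) (mul : V -> V -> V) (star : V -> V)
    (nrm : V -> R) : Prop :=
  [/\
      [/\ (forall (k : K) x y z, mul (k *: x + y) z = k *: mul x z + mul y z),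
          (forall (k : K) x y z, mul z (k *: x + y) = k *: mul z x + mul z y) &
          (forall x y z, mul x (mul y z) = mul (mul x y) z)],
      [/\ (forall (k : K) x y, star (k *: x + y) = (k^*)%C *: star x + star y),
          (forall x, star (star x) = x) &
          (forall x y, star (mul x y) = mul (star y) (star x))],
      [/\ (forall x, 0 <= nrm x), (forall x, nrm x = 0 -> x = 0),
          (forall x y, nrm (x + y) <= nrm x + nrm y),
          (forall (k : K) x, ((nrm (k *: x))%:C)%C = `|k| * ((nrm x)%:C)%C) &
          (forall x y, nrm (mul x y) <= nrm x * nrm y)],
      (forall x, nrm (mul (star x) x) = nrm x ^+ 2) &
      complete_wrt nrm].

Record cstarAlg := CStarAlg {
  cs_car :> lmodType K;
  cs_mul : cs_car -> cs_car -> cs_car;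
  cs_star : cs_car -> cs_car;
  cs_norm : cs_car -> R;
  cs_ax : cstar_axioms cs_mul cs_star cs_norm }.

Section Corr.
Variable A : cstarAlg.
Local Notation mulA := (@cs_mul A).
Local Notation starA := (@cs_star A).
Local Notation nrmA := (@cs_norm A).

(* right Hilbert A-module: right action ract, A-valued inner product ip;
   positivity <x,x> >= 0 in A means <x,x> = b* b for some b in A *)
Definition hilbert_module_axioms (X : lmodType K) (ract : X -> cs_car A -> X)
    (ip : X -> X -> cs_car A) : Prop :=
  [/\ [/\ (forall (k : K) x y a, ract (k *: x + y) a = k *: ract x a + ract y a),
          (forall (k : K) x a b, ract x (k *: a + b) = k *: ract x a + ract x b) &
          (forall x a b, ract (ract x a) b = ract x (mulA a b))],
      (forall (k : K) x y z, ip x (k *: y + z) = k *: ip x y + ip x z),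
      (forall x y a, ip x (ract y a) = mulA (ip x y) a),
      (forall x y, ip y x = starA (ip x y)) &
      [/\ (forall x, exists b, ip x x = mulA (starA b) b),
          (forall x, ip x x = 0 -> x = 0) &
          complete_wrt (fun x => Num.sqrt (nrmA (ip x x)))]].

Definition is_adjoint (X : Type) (ip : X -> X -> cs_car A) (S S' : X -> X) : Prop :=
  forall x y, ip (S x) y = ip x (S' y).

Definition adjointable (X : Type) (ip : X -> X -> cs_car A) (S : X -> X) : Prop :=
  exists S', is_adjoint ip S S'.

Definition left_action_axioms (X : lmodType K) (ip : X -> X -> cs_car A)
    (phi : A -> X -> X) : Prop :=
  [/\ (forall a, adjointable ip (phi a)),
      (forall a, is_adjoint ip (phi a) (phi (starA a))),
      (forall (k : K) a b x, phi (k *: a + b) x = k *: phi a x + phi b x) &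
      (forall a b x, phi (mulA a b) x = phi a (phi b x))].

Record correspondence := Correspondence {
  co_car :> lmodType K;
  co_ract : co_car -> cs_car A -> co_car;
  co_ip : co_car -> co_car -> A;
  co_phi : A -> co_car -> co_car;
  co_hilb : hilbert_module_axioms co_ract co_ip;
  co_left : left_action_axioms co_ip co_phi }.

Variable X : correspondence.
Local Notation phi := (@co_phi X).
Local Notation ract := (@co_ract X).
Local Notation ip := (@co_ip X).

Definition in_kerphi (f : cs_car A) : Prop := forall x : X, phi f x = 0.

(* T = (ker phi)^(N): c_0-sequences in ker phi.  Coordinates are indexed
   by nat, coordinate n (0-based) being the paper's coordinate n+1. *)
Definition in_tail (g : nat -> cs_car A) : Prop :=
  (forall n, in_kerphi (g n)) /\
  (forall e : R, 0 < e -> exists N : nat, forall n : nat,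
      (N <= n)%N -> nrmA (g n) < e).

Definition zseq : nat -> cs_car A := fun _ => 0.

Definition eps (i : nat) (f : cs_car A) : nat -> cs_car A :=
  fun n => if n == i then f else 0.

Definition Bty := ((cs_car A) * (nat -> cs_car A))%type.
Definition in_B (b : Bty) : Prop := in_tail b.2.
Definition in_J (b : Bty) : Prop := in_kerphi b.1 /\ in_tail b.2.

Definition addB (b c : Bty) : Bty := (b.1 + c.1, fun n => b.2 n + c.2 n).
Definition scaleB (k : K) (b : Bty) : Bty := (k *: b.1, fun n => k *: b.2 n).
Definition mulB (b c : Bty) : Bty := (mulA b.1 c.1, fun n => mulA (b.2 n) (c.2 n)).
Definition starB (b : Bty) : Bty := (starA b.1, fun n => starA (b.2 n)).

Definition Yty := (X * (nat -> cs_car A))%type.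
Definition in_Y (y : Yty) : Prop := in_tail y.2.

Definition zeroY : Yty := (0, zseq).
Definition addY (y z : Yty) : Yty := (y.1 + z.1, fun n => y.2 n + z.2 n).
Definition scaleY (k : K) (y : Yty) : Yty := (k *: y.1, fun n => k *: y.2 n).
Definition ractY (y : Yty) (b : Bty) : Yty :=
  (ract y.1 b.1, fun n => mulA (y.2 n) (b.2 n)).
Definition ipY (y z : Yty) : Bty :=
  (ip y.1 z.1, fun n => mulA (starA (y.2 n)) (z.2 n)).
(* phi_B(a, f)(xi, g) = (phi(a) xi, (a g_1, f_1 g_2, f_2 g_3, ...)) *)
Definition phiB (b : Bty) (y : Yty) : Yty :=
  (phi b.1 y.1,
   fun n => match n with
            | 0 => mulA b.1 (y.2 0%N)
            | n'.+1 => mulA (b.2 n') (y.2 n)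
            end).

Definition ThetaY (y y' : Yty) : Yty -> Yty := fun z => ractY y (ipY y' z).

Definition sumTheta (s : seq (Yty * Yty)) : Yty -> Yty :=
  fun z => foldr (fun p acc => addY (ThetaY p.1 p.2 z) acc) zeroY s.

(* ||y||_Y <= r, where ||y||^2 = ||<y,y>_B|| and
   ||(a,g)||_B = max(||a||, sup_n ||g_n||) *)
Definition normY_le (y : Yty) (r : R) : Prop :=
  0 <= r /\ nrmA (ip y.1 y.1) <= r ^+ 2 /\
  (forall n, nrmA (mulA (starA (y.2 n)) (y.2 n)) <= r ^+ 2).

(* K(Y): operator-norm closure of the span of the Theta_{y,y'} *)
Definition compactY (S : Yty -> Yty) : Prop :=
  forall e : R, 0 < e -> exists s : seq (Yty * Yty),
    (forall p, Stdlib.Lists.List.In p s -> in_Y p.1 /\ in_Y p.2) /\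
    forall z r, in_Y z -> normY_le z r ->
      normY_le (addY (S z) (scaleY (-1) (sumTheta s z))) (e * r).

Variable C : cstarAlg.
Local Notation mulC := (@cs_mul C).
Local Notation starC := (@cs_star C).

Definition is_representation (pi : Bty -> C) (t : Yty -> C) : Prop :=
  [/\
      [/\ (forall (k : K) b c, in_B b -> in_B c ->
            pi (addB (scaleB k b) c) = k *: pi b + pi c),
          (forall b c, in_B b -> in_B c -> pi (mulB b c) = mulC (pi b) (pi c)) &
          (forall b, in_B b -> pi (starB b) = starC (pi b))],
      (forall (k : K) y z, in_Y y -> in_Y z ->
          t (addY (scaleY k y) z) = k *: t y + t z),
      (forall y z, in_Y y -> in_Y z -> mulC (starC (t y)) (t z) = pi (ipY y z)),
      (forall b y, in_B b -> in_Y y -> t (phiB b y) = mulC (pi b) (t y)) &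
      (forall y b, in_Y y -> in_B b -> t (ractY y b) = mulC (t y) (pi b))].

(* pi1 is the *-homomorphism pi^(1) : K(Y) -> C with
   pi1 (Theta_{y,y'}) = t(y) t(y')^*.  Operators are functions on the
   carrier Yty; pi1 only depends on their restriction to Y. *)
Definition is_pi1 (t : Yty -> C) (pi1 : (Yty -> Yty) -> C) : Prop :=
  [/\ (forall S S', compactY S ->
          (forall z, in_Y z -> S z = S' z) -> pi1 S = pi1 S'),
      (forall (k : K) S S', compactY S -> compactY S' ->
          pi1 (fun z => addY (scaleY k (S z)) (S' z)) = k *: pi1 S + pi1 S'),
      (forall S S', compactY S -> compactY S' ->
          pi1 (fun z => S (S' z)) = mulC (pi1 S) (pi1 S')),
      (forall S S', compactY S -> compactY S' ->
          (forall z w, in_Y z -> in_Y w -> ipY (S z) w = ipY z (S' w)) ->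
          pi1 S' = starC (pi1 S)) &
      (forall y y', in_Y y -> in_Y y' ->
          pi1 (ThetaY y y') = mulC (t y) (starC (t y')))].

End Corr.
End Defs.

From HB Require Import structures.
From mathcomp Require Import all_boot all_order all_algebra.
From mathcomp Require Import complex reals.
From Stdlib Require Import FunctionalExtensionality.
Set Implicit Arguments. Unset Strict Implicit. Unset Printing Implicit Defensive.
Import Order.TTheory GRing.Theory Num.Theory.
Local Open Scope ring_scope.

(* If pi(0, eps_i f) = 0, then t(0, eps_i (f' f)) = t(0, eps_i f') pi(0, eps_i f) = 0,
   where f' is the adjoint of f; so pi^(1) kills the rank-one operator Theta built
   from h := f' f.  That operator is phi_B(h h', 0) for i = 0 and
   phi_B(0, eps_(i-1) (h h')) for i > 0, in both cases with argument in the ideal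
   ker phi (+) T, so coisometry makes pi vanish on this argument.  Injectivity of pi
   on A, resp. induction on i, gives h h' = 0, and the C*-identity gives f = 0. *)

Lemma additive_eq0 (K : pzRingType) (V W : lmodType K) (f : V -> W) :
  (forall (k : K) x y, f (k *: x + y) = k *: f x + f y) -> f 0 = 0.
Proof.
move=> f_lin; apply: (addrI (f 0)); rewrite addr0.
by have /esym := f_lin 1 0 0; rewrite !scale1r add0r.
Qed.

Section CStarAlgebra.
Variables (R : realType) (A : cstarAlg R).
Local Notation mulA := (@cs_mul R A).
Local Notation starA := (@cs_star R A).

Lemma cs_mul0r x : mulA 0 x = 0.
Proof.
have [[mulDl _ _] _ _ _ _] := cs_ax A.
exact: (@additive_eq0 _ _ _ (mulA^~ x) (fun k a b => mulDl k a b x)).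
Qed.

Lemma cs_mulr0 x : mulA x 0 = 0.
Proof.
have [[_ mulDr _] _ _ _ _] := cs_ax A.
exact: (@additive_eq0 _ _ _ (mulA x) (fun k a b => mulDr k a b x)).
Qed.

Lemma cs_star0 : starA 0 = 0.
Proof.
have [_ [starD _ _] _ _ _] := cs_ax A.
apply: (addrI (starA 0)); rewrite addr0.
by have /esym := starD 1 0 0; rewrite rmorph1 !scale1r add0r.
Qed.

Lemma cs_norm0 : cs_norm (0 : A) = 0.
Proof.
have [_ _ [_ _ _ normZ _] _ _] := cs_ax A.
by have := normZ 0 0; rewrite scale0r normr0 mul0r => -[].
Qed.

Lemma cs_starmul_eq0 x : mulA (starA x) x = 0 -> x = 0.
Proof.
have [_ _ [_ norm_eq0 _ _ _] cstar_id _] := cs_ax A.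
move=> xx0; apply: norm_eq0; apply/eqP; rewrite -sqrf_eq0.
by rewrite -cstar_id xx0 cs_norm0.
Qed.

Lemma cs_mulstar_eq0 x : mulA x (starA x) = 0 -> x = 0.
Proof.
have [_ [_ starK _] _ _ _] := cs_ax A.
move=> xx0; have /(congr1 starA) : starA x = 0 by apply: cs_starmul_eq0; rewrite starK.
by rewrite starK cs_star0.
Qed.

End CStarAlgebra.

Section Correspondence.
Variables (R : realType) (A : cstarAlg R) (X : correspondence A).
Local Notation mulA := (@cs_mul R A).
Local Notation starA := (@cs_star R A).
Local Notation phi := (@co_phi R A X).
Local Notation ip := (@co_ip R A X).

Lemma co_ract0 a : co_ract (0 : X) a = 0.
Proof.
have [[ractDl _ _] _ _ _ _] := co_hilb X.
exact: (@additive_eq0 _ _ _ ((@co_ract R A X)^~ a) (fun k x y => ractDl k x y a)).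
Qed.

Lemma co_ipr0 x : ip x 0 = 0.
Proof. by have [_ ipDr _ _ _] := co_hilb X; apply: (@additive_eq0 _ _ _ (ip x)). Qed.

Lemma co_ip0r x : ip 0 x = 0.
Proof. by have [_ _ _ ipC _] := co_hilb X; rewrite ipC co_ipr0 cs_star0. Qed.

Lemma co_phi0 x : phi 0 x = 0.
Proof.
have [_ _ phiD _] := co_left X.
exact: (@additive_eq0 _ _ _ (phi^~ x) (fun k a b => phiD k a b x)).
Qed.

Lemma co_phir0 a : phi a 0 = 0.
Proof.
have [_ phi_adj _ _] := co_left X; have [_ _ _ _ [_ ip_eq0 _]] := co_hilb X.
by apply: ip_eq0; rewrite phi_adj co_ip0r.
Qed.

Lemma in_kerphiMl a b : in_kerphi X a -> in_kerphi X (mulA a b).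
Proof. by have [_ _ _ phiM] := co_left X; move=> ka x; rewrite phiM ka. Qed.

Lemma in_kerphiMr a b : in_kerphi X b -> in_kerphi X (mulA a b).
Proof. by have [_ _ _ phiM] := co_left X; move=> kb x; rewrite phiM kb co_phir0. Qed.

Lemma in_kerphiV a : in_kerphi X a -> in_kerphi X (starA a).
Proof.
have [_ phi_adj _ _] := co_left X; have [_ _ _ _ [_ ip_eq0 _]] := co_hilb X.
have [_ [_ starK _] _ _ _] := cs_ax A.
by move=> ka x; apply: ip_eq0; rewrite phi_adj starK ka co_ipr0.
Qed.

Lemma in_tail_zseq : in_tail X (zseq A).
Proof.
split=> [n x|e e_gt0]; first exact: co_phi0.
by exists 0%N => n _; rewrite cs_norm0.
Qed.

Lemma in_tail_eps i f : in_kerphi X f -> in_tail X (eps i f).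
Proof.
move=> kf; split=> [n|e e_gt0]; first by rewrite /eps; case: (n == i) => // x; apply: co_phi0.
by exists i.+1 => n lt_in; rewrite /eps gtn_eqF // cs_norm0.
Qed.

Lemma ThetaY_eps0 h : in_kerphi X h ->
  ThetaY ((0 : X), eps 0 h) (0, eps 0 h) = phiB (mulA h (starA h), zseq A).
Proof.
have [[_ _ mulA_assoc] _ _ _ _] := cs_ax A.
move=> kh; apply: functional_extensionality => z.
rewrite /ThetaY /ractY /ipY /phiB /=; congr (_, _).
  by rewrite co_ract0 (in_kerphiMl (starA h) kh).
by apply: functional_extensionality => -[|n]; rewrite /eps /zseq /= ?mulA_assoc ?cs_mul0r.
Qed.

Lemma ThetaY_epsS i h :
  ThetaY ((0 : X), eps i.+1 h) (0, eps i.+1 h) = phiB (0, eps i (mulA h (starA h))).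
Proof.
have [[_ _ mulA_assoc] _ _ _ _] := cs_ax A.
apply: functional_extensionality => z.
rewrite /ThetaY /ractY /ipY /phiB /=; congr (_, _); first by rewrite co_ract0 co_phi0.
apply: functional_extensionality => -[|n]; rewrite /eps /= ?cs_mul0r // eqSS.
by case: (n == i); rewrite ?mulA_assoc ?cs_star0 ?cs_mul0r.
Qed.

End Correspondence.

Section Representation.
Variables (R : realType) (A : cstarAlg R) (X : correspondence A) (C : cstarAlg R).
Variables (pi : Bty A -> C) (t : Yty X -> C) (pi1 : (Yty X -> Yty X) -> C).
Hypothesis rep : is_representation pi t.
Hypothesis pi1_hom : is_pi1 t pi1.
Hypothesis coisometric : forall b, in_J X b -> pi1 (phiB b) = pi b.
Local Notation mulA := (@cs_mul R A).
Local Notation starA := (@cs_star R A).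

Lemma rep_pi_zero : pi (0, zseq A) = 0.
Proof.
have [[piD _ _] _ _ _ _] := rep.
have zB : in_B X (0, zseq A) := in_tail_zseq X.
apply: (addrI (pi (0, zseq A))); rewrite addr0 -{1}[pi _]scale1r -piD //.
rewrite /addB /scaleB /=; congr (pi (_, _)); first by rewrite scale1r addr0.
by apply: functional_extensionality => n; rewrite /zseq scale1r addr0.
Qed.

Lemma rep_t_eps_starmul j f : in_kerphi X f -> pi (0, eps j f) = 0 ->
  t (0, eps j (mulA (starA f) f)) = 0.
Proof.
have [_ _ _ _ t_ract] := rep.
move=> kf pif0; have := t_ract (0, eps j (starA f)) (0, eps j f)
  (in_tail_eps j (in_kerphiV kf)) (in_tail_eps j kf).
rewrite pif0 cs_mulr0 /ractY /= co_ract0 => <-; congr (t (_, _)).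
by apply: functional_extensionality => n; rewrite /eps; case: (n == j); rewrite ?cs_mul0r.
Qed.

Lemma coisometric_pi_eq0 (b : Bty A) (y : Yty X) :
  in_J X b -> in_Y y -> t y = 0 -> ThetaY y y = phiB b -> pi b = 0.
Proof.
have [_ _ _ _ pi1_Theta] := pi1_hom.
move=> Jb Yy ty0 Theta_phib.
by rewrite -coisometric // -Theta_phib pi1_Theta // ty0 cs_mul0r.
Qed.

End Representation.

Theorem mainTheorem5 (R : realType) (A : cstarAlg R) (X : correspondence A)
    (C : cstarAlg R) (pi : Bty A -> C) (t : Yty X -> C)
    (pi1 : (Yty X -> Yty X) -> C) :
  (* (pi, t) is a representation of Y over B in C *)
  is_representation pi t ->
  (* pi1 is the induced *-homomorphism pi^(1) : K(Y) -> C *)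
  is_pi1 t pi1 ->
  (* coisometric on the ideal ker phi (+) T of B *)
  (forall b : Bty A, in_J X b -> pi1 (phiB b) = pi b) ->
  (* a |-> pi (a, 0) is injective on A *)
  (forall a a' : cs_car A, pi (a, zseq A) = pi (a', zseq A) -> a = a') ->
  forall (i : nat) (f : cs_car A),
    in_kerphi X f -> pi (0, eps i f) = 0 -> f = 0.
Proof.
move=> rep hpi1 coiso inj; elim=> [|i IH] f kf pif0.
all: set h := cs_mul (cs_star f) f.
all: have kh : in_kerphi X h := in_kerphiMr _ kf.
all: have th0 := rep_t_eps_starmul rep kf pif0.
all: apply/cs_starmul_eq0/cs_mulstar_eq0.
- apply: inj; rewrite (rep_pi_zero rep).
  apply: (coisometric_pi_eq0 hpi1 coiso _ _ th0 (ThetaY_eps0 kh)).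
    by split; [exact: in_kerphiMl | exact: in_tail_zseq].
  exact: in_tail_eps.
- apply: IH; first exact: in_kerphiMl.
  apply: (coisometric_pi_eq0 hpi1 coiso _ _ th0 (ThetaY_epsS X i h)) => //.
    by split; [exact: co_phi0 | apply/in_tail_eps/in_kerphiMl].
  exact: in_tail_eps.
Qed.
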